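(* Let $f_0:\mathbb{R}^n\times[0,\infty)\to\mathbb{R}$ be twice continuously differentiable in $\mathbf{x}$ and continuously differentiable in $t$, with $\nabla_{\mathbf{x}\mathbf{x}} f_0(\mathbf{x},t)\succeq m\mathbf{I}_n$ for some $m>0$ and all $(\mathbf{x},t)$. Let $\mathbf{x}^\star(t)=\arg\min_{\mathbf{x}\in\mathbb{R}^n} f_0(\mathbf{x},t)$. Let $\mathbf{P}\in\mathbb{S}^n_{++}$ with $\mathbf{P}\succeq\sigma\mathbf{I}_n$ for some $\sigma>0$, and let $\mathbf{x}(t)$, $t\ge 0$, be a solution of $$\dot{\mathbf{x}}(t)=-\nabla_{\mathbf{x}\mathbf{x}} f_0(\mathbf{x}(t),t)^{-1}\big[\mathbf{P}\nabla_{\mathbf{x}} f_0(\mathbf{x}(t),t)+\nabla_{\mathbf{x}t} f_0(\mathbf{x}(t),t)\big],\qquad \mathbf{x}(0)=\mathbf{x}_0,$$ with $\mathbf{x}_0\in\mathbb{R}^n$ arbitrary. Then there is a constant $0\le C(\mathbf{x}_0,m)<\infty$ (e.g. $C=\tfrac{2}{m}\|\nabla_{\mathbf{x}} f_0(\mathbf{x}_0,0)\|_2$) such that for all $t\ge 0$, $$\|\mathbf{x}(t)-\mathbf{x}^\star(t)\|_2\le C(\mathbf{x}_0,m)\,e^{-\sigma t}.$$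
   Context: $\nabla_{\mathbf{x}} f_0$ is the gradient in $\mathbf{x}$, $\nabla_{\mathbf{x}\mathbf{x}} f_0$ the Hessian in $\mathbf{x}$, and $\nabla_{\mathbf{x}t} f_0\in\mathbb{R}^n$ the partial derivative of $\nabla_{\mathbf{x}} f_0$ with respect to $t$. $\mathbb{S}^n_{++}$ denotes the symmetric positive definite $n\times n$ matrices; $\mathbf{A}\succeq\mathbf{B}$ means $\mathbf{A}-\mathbf{B}$ is positive semidefinite. *)

From mathcomp Require Import all_boot.
From Stdlib Require Import Reals.
Set Implicit Arguments. Unset Strict Implicit. Unset Printing Implicit Defensive.
Local Open Scope R_scope.

Definition vec (n : nat) := 'I_n -> R.
Definition mat (n : nat) := 'I_n -> 'I_n -> R.

Definition vadd n (u v : vec n) : vec n := fun i => u i + v i.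
Definition vsub n (u v : vec n) : vec n := fun i => u i - v i.
Definition vscale n (a : R) (u : vec n) : vec n := fun i => a * u i.
Definition vopp n (u : vec n) : vec n := fun i => - u i.

Definition basis n (i : 'I_n) : vec n := fun j => if i == j then 1 else 0.

Definition dot n (u v : vec n) : R := \big[Rplus/0]_(i < n) (u i * v i).
Definition norm2 n (u : vec n) : R := sqrt (dot u u).

Definition mulmv n (A : mat n) (v : vec n) : vec n :=
  fun i => \big[Rplus/0]_(j < n) (A i j * v j).

Definition symmetric n (A : mat n) : Prop := forall i j, A i j = A j i.
Definition posdef n (A : mat n) : Prop :=
  forall v : vec n, (exists i, v i <> 0) -> 0 < dot v (mulmv A v).
Definition spd n (A : mat n) : Prop := symmetric A /\ posdef A.
Definition loewner_ge_scalar n (A : mat n) (c : R) : Prop :=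
  forall v : vec n, c * dot v v <= dot v (mulmv A v).

Definition deriv_nonneg (g : R -> R) (t l : R) : Prop :=
  forall eps, 0 < eps -> exists delta, 0 < delta /\
    forall h, h <> 0 -> Rabs h < delta -> 0 <= t + h ->
      Rabs ((g (t + h) - g t) / h - l) < eps.

Definition cont_xt n (F : vec n -> R -> R) (x : vec n) (t : R) : Prop :=
  forall eps, 0 < eps -> exists delta, 0 < delta /\
    forall y s, 0 <= s -> norm2 (vsub y x) < delta -> Rabs (s - t) < delta ->
      Rabs (F y s - F x t) < eps.

Definition partial_x n (F : vec n -> R) (x : vec n) (i : 'I_n) (l : R) : Prop :=
  derivable_pt_lim (fun s => F (vadd x (vscale s (basis i)))) 0 l.

(* Along the trajectory, g(t) := grad_x f0(x(t), t) has derivative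
   hess * xdot + grad_xt f0 = -P g by the ODE.  Since P >= sigma I, the quantity
   |g(t)|^2 e^(2 sigma t) is nonincreasing, so |g(t)| <= |g(0)| e^(-sigma t).
   The gradient vanishes at the minimizer x*(t), and strong convexity makes
   grad_x f0(., t) m-strongly monotone, whence m |x(t) - x*(t)| <= |g(t)|.
   This gives the bound with C = |g(0)| / m. *)

From HB Require Import structures.
From mathcomp Require Import all_boot zify.
From Stdlib Require Import Reals Lra FunctionalExtensionality.
Set Implicit Arguments. Unset Strict Implicit. Unset Printing Implicit Defensive.
Local Open Scope R_scope.

Lemma Rplus_associative : associative Rplus.
Proof. by move=> *; rewrite Rplus_assoc. Qed.

HB.instance Definition _ :=
  Monoid.isComLaw.Build R 0 Rplus Rplus_associative Rplus_comm Rplus_0_l.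

Local Notation "\sum_ ( i < n ) F" := (\big[Rplus/0]_(i < n) F) : R_scope.

Definition norm1 n (u : vec n) : R := \sum_(i < n) Rabs (u i).

(** * Finite sums and vectors *)

Lemma big_Rle n (F G : 'I_n -> R) :
  (forall i, F i <= G i) -> \sum_(i < n) F i <= \sum_(i < n) G i.
Proof. by move=> FG; apply: (big_ind2 Rle) => // *; lra. Qed.

Lemma big_Rge0 n (F : 'I_n -> R) : (forall i, 0 <= F i) -> 0 <= \sum_(i < n) F i.
Proof. by move=> F0; apply: (big_ind (Rle 0)) => // *; lra. Qed.

Lemma Rabs_big_le n (F : 'I_n -> R) :
  Rabs (\sum_(i < n) F i) <= \sum_(i < n) Rabs (F i).
Proof.
apply: (big_ind2 (fun a b => Rabs a <= b)) => //.
- by rewrite Rabs_R0; lra.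
- by move=> a b c d ab cd; apply: Rle_trans (Rabs_triang _ _) _; lra.
- by move=> i _; lra.
Qed.

Lemma big_Rmult_l n (c : R) (F : 'I_n -> R) :
  c * \sum_(i < n) F i = \sum_(i < n) c * F i.
Proof. by apply: (big_ind2 (fun a b => c * a = b)) => [|a b d e <- <-|]; [ring|ring|]. Qed.

Lemma big_Ropp n (F : 'I_n -> R) : \sum_(i < n) - F i = - \sum_(i < n) F i.
Proof. by apply: (big_ind2 (fun a b => a = - b)) => [|a b d e -> ->|]; [ring|ring|]. Qed.

Lemma big_Rminus n (F G : 'I_n -> R) :
  \sum_(i < n) (F i - G i) = \sum_(i < n) F i - \sum_(i < n) G i.
Proof. by rewrite /Rminus big_split big_Ropp. Qed.

Lemma big_telescope n (a : nat -> R) :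
  \sum_(k < n) (a k.+1 - a k) = a n - a O.
Proof. by elim: n => [|n IH]; rewrite ?big_ord0 ?big_ord_recr ?IH /=; ring. Qed.

Lemma dot_ge0 n (u : vec n) : 0 <= dot u u.
Proof. by apply: big_Rge0 => i; nra. Qed.

Lemma dotC n (u v : vec n) : dot u v = dot v u.
Proof. by apply: eq_bigr => i _; ring. Qed.

Lemma dot_vsubl n (a b d : vec n) : dot (vsub a b) d = dot a d - dot b d.
Proof. by rewrite /dot -big_Rminus; apply: eq_bigr => i _; rewrite /vsub; ring. Qed.

Lemma norm1_ge0 n (u : vec n) : 0 <= norm1 u.
Proof. by apply: big_Rge0 => i; apply: Rabs_pos. Qed.

Lemma Rabs_le_norm1 n (u : vec n) i : Rabs (u i) <= norm1 u.
Proof.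
rewrite /norm1 (bigD1 i) //= -{1}(Rplus_0_r (Rabs (u i))).
apply: Rplus_le_compat_l.
by apply: (big_ind (Rle 0)) => // *; [lra | lra | apply: Rabs_pos].
Qed.

Lemma dot_le_norm1_sqr n (u : vec n) : dot u u <= norm1 u * norm1 u.
Proof.
rewrite {2}/norm1 big_Rmult_l; apply: big_Rle => i.
have -> : u i * u i = Rabs (u i) * Rabs (u i) by rewrite -Rabs_mult Rabs_pos_eq //; nra.
by apply: Rmult_le_compat_r; [apply: Rabs_pos | apply: Rabs_le_norm1].
Qed.

Lemma norm2_le_norm1 n (u : vec n) : norm2 u <= norm1 u.
Proof.
rewrite /norm2 -(sqrt_square (norm1 u)); last exact: norm1_ge0.
exact/sqrt_le_1_alt/dot_le_norm1_sqr.
Qed.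

Lemma norm2_le_coord n (u v : vec n) :
  (forall j, u j * u j <= v j * v j) -> norm2 u <= norm2 v.
Proof. by move=> uv; apply/sqrt_le_1_alt/big_Rle. Qed.

Lemma vadd_vscaleD n (w e : vec n) a b :
  vadd (vadd w (vscale a e)) (vscale b e) = vadd w (vscale (a + b) e).
Proof. by apply: functional_extensionality => j; rewrite /vadd /vscale; ring. Qed.

Lemma vadd_vscale0 n (w e : vec n) : vadd w (vscale 0 e) = w.
Proof. by apply: functional_extensionality => j; rewrite /vadd /vscale; ring. Qed.

(* Expand [|g - m d|^2 >= 0] instead of appealing to Cauchy-Schwarz. *)
Lemma mul_norm2_le_of_coercive n (g d : vec n) m :
  0 < m -> m * dot d d <= dot g d -> m * norm2 d <= norm2 g.
Proof.
move=> m_gt0 coer.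
have expand : dot (fun i => g i - m * d i) (fun i => g i - m * d i) =
    dot g g - 2 * m * dot g d + m * m * dot d d.
  rewrite /dot (big_Rmult_l (2 * m)) (big_Rmult_l (m * m)) -big_Rminus -big_split.
  by apply: eq_bigr => i _ /=; ring.
have := dot_ge0 (fun i => g i - m * d i); rewrite expand => sq_ge0.
have := dot_ge0 d => dd_ge0.
rewrite /norm2 -(sqrt_square m); last lra.
rewrite -sqrt_mult_alt; last nra.
apply: sqrt_le_1_alt; nra.
Qed.

(** * One-variable calculus *)

Lemma finite_delta n (Q : 'I_n -> R -> Prop) :
  (forall k d d', 0 < d' <= d -> Q k d -> Q k d') ->
  (forall k, exists d, 0 < d /\ Q k d) -> exists d, 0 < d /\ forall k, Q k d.
Proof.
elim: n Q => [|n IH] Q Qmon Qex; first by exists 1; split; [lra | case].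
have [d1 [d1_gt0 Qd1]] := IH (fun k => Q (widen_ord (leqnSn n) k))
  (fun k => Qmon _) (fun k => Qex _).
have [d2 [d2_gt0 Qd2]] := Qex ord_max.
have dmin_gt0 := Rmin_pos _ _ d1_gt0 d2_gt0.
exists (Rmin d1 d2); split => // k.
case: (ltnP k n) => kn.
- have -> : k = widen_ord (leqnSn n) (Ordinal kn) by apply: val_inj.
  by apply: Qmon (Qd1 _); split; [|apply: Rmin_l].
- have -> : k = ord_max by apply: val_inj => /=; have := ltn_ord k; lia.
  by apply: Qmon Qd2; split; [|apply: Rmin_r].
Qed.

Lemma exists_Rmult_le M eps :
  0 <= M -> 0 < eps -> exists e, 0 < e <= 1 /\ e * M <= eps.
Proof.
move=> M_ge0 eps_gt0.
have q_gt0 : 0 < eps / (M + 1) by apply: Rdiv_lt_0_compat; lra.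
exists (Rmin 1 (eps / (M + 1))); split; first by split; [apply: Rmin_pos; lra | apply: Rmin_l].
apply: Rle_trans (Rmult_le_compat_r _ _ _ M_ge0 (Rmin_r _ _)) _.
apply: (Rmult_le_reg_r (M + 1)); first lra.
have -> : eps / (M + 1) * M * (M + 1) = eps * M by field; lra.
nra.
Qed.

Lemma Rabs_div_le a b h : h <> 0 -> Rabs a <= b * Rabs h -> Rabs (a / h) <= b.
Proof.
move=> h_neq0 ab.
have := Rabs_pos_lt h h_neq0.
rewrite /Rdiv Rabs_mult Rabs_inv => h_gt0.
apply: (Rmult_le_reg_r (Rabs h)) => //; rewrite Rmult_assoc Rinv_l; lra.
Qed.

Lemma Rabs_increment_le a h l :
  h <> 0 -> Rabs (a / h - l) < 1 -> Rabs a <= (Rabs l + 1) * Rabs h.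
Proof.
move=> h_neq0 close.
have -> : a = (a / h - l + l) * h by field.
rewrite Rabs_mult; apply: Rmult_le_compat_r; first exact: Rabs_pos.
by apply: Rle_trans (Rabs_triang _ _) _; lra.
Qed.

Lemma derivable_pt_lim_shift (f : R -> R) c l :
  derivable_pt_lim (fun h => f (c + h)) 0 l -> derivable_pt_lim f c l.
Proof.
move=> df eps eps_gt0; have [d Hd] := df eps eps_gt0.
by exists d => h h_neq0 hd; have := Hd h h_neq0 hd; rewrite Rplus_0_l Rplus_0_r.
Qed.

Lemma derivable_pt_lim_big n (F : 'I_n -> R -> R) (F' : 'I_n -> R) s :
  (forall i, derivable_pt_lim (F i) s (F' i)) ->
  derivable_pt_lim (fun r => \sum_(i < n) F i r) s (\sum_(i < n) F' i).
Proof.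
elim: n F F' => [|n IH] F F' dF.
  have -> : (fun r => \sum_(i < 0) F i r) = fct_cte 0.
    by apply: functional_extensionality => r; rewrite big_ord0.
  by rewrite big_ord0; apply: derivable_pt_lim_const.
have -> : (fun r => \sum_(i < n.+1) F i r) =
    plus_fct (fun r => \sum_(i < n) F (widen_ord (leqnSn n) i) r) (F ord_max).
  by apply: functional_extensionality => r; rewrite big_ord_recr.
rewrite big_ord_recr /=.
by apply: derivable_pt_lim_plus; [apply: IH => i |]; apply: dF.
Qed.

Lemma MVT_Rabs (f f' : R -> R) :
  (forall c, derivable_pt_lim f c (f' c)) ->
  forall d, exists c, Rabs c <= Rabs d /\ f d - f 0 = f' c * d.
Proof.
move=> df d; case: (Rtotal_order d 0) => [d_lt0|[->|d_gt0]].
- have [c [fc cd]] := MVT_cor2 f f' d 0 d_lt0 (fun c _ => df c).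
  by exists c; split; [rewrite !Rabs_left; lra | lra].
- by exists 0; split; [lra | ring].
- have [c [fc cd]] := MVT_cor2 f f' 0 d d_gt0 (fun c _ => df c).
  by exists c; split; [rewrite !Rabs_right; lra | lra].
Qed.

Lemma Rle_of_deriv_nonpos (W W' : R -> R) t :
  0 <= t -> (forall s, 0 <= s -> derivable_pt_lim W s (W' s)) ->
  (forall s, 0 <= s -> W' s <= 0) -> W t <= W 0.
Proof.
move=> t_ge0 dW W'_le0.
case: (Rle_lt_or_eq_dec 0 t t_ge0) => [t_gt0|<-]; last lra.
have [c [Wc [c_gt0 _]]] := MVT_cor2 W W' 0 t t_gt0 (fun c c0t => dW c (proj1 c0t)).
have := W'_le0 c (Rlt_le _ _ c_gt0); nra.
Qed.

(* Continuation of [g] to the left of [0] by its tangent line, so that the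
   one-sided derivatives on [0,oo) become two-sided ones. *)
Definition extend_left (g : R -> R) (l0 s : R) : R :=
  if Rle_dec 0 s then g s else g 0 + s * l0.

Lemma extend_left_id g l0 s : 0 <= s -> extend_left g l0 s = g s.
Proof. by rewrite /extend_left; case: Rle_dec. Qed.

Lemma derivable_extend_left (g dg : R -> R) t :
  (forall s, 0 <= s -> deriv_nonneg g s (dg s)) -> 0 <= t ->
  derivable_pt_lim (extend_left g (dg 0)) t (dg t).
Proof.
move=> dg_g t_ge0 eps eps_gt0.
have [d [d_gt0 Hd]] := dg_g t t_ge0 eps eps_gt0.
rewrite /extend_left.
case: (Rle_lt_or_eq_dec 0 t t_ge0) => [t_gt0|t0]; last subst t.
- have dt_gt0 : 0 < Rmin d t by apply: Rmin_pos.
  exists (mkposreal _ dt_gt0) => h h_neq0 /= h_lt.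
  have h_lt_d : Rabs h < d by apply: Rlt_le_trans h_lt (Rmin_l _ _).
  have h_lt_t : Rabs h < t by apply: Rlt_le_trans h_lt (Rmin_r _ _).
  have th_ge0 : 0 <= t + h by have := Rle_abs (- h); rewrite Rabs_Ropp; lra.
  by destruct (Rle_dec 0 (t + h)), (Rle_dec 0 t) => /=; [apply: Hd | lra ..].
- exists (mkposreal _ d_gt0) => h h_neq0 /= h_lt.
  destruct (Rle_dec 0 0), (Rle_dec 0 (0 + h)) => /=; [exact: Hd | | lra ..].
  have -> : (g 0 + (0 + h) * dg 0 - g 0) / h - dg 0 = 0 by field.
  by rewrite Rabs_R0.
Qed.

Lemma partial_x_eq0_at_min n (F : vec n -> R) y i l :
  partial_x F y i l -> (forall z, F y <= F z) -> l = 0.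
Proof.
move=> dF ymin.
rewrite -(derive_pt_eq_0 _ _ _ (exist _ l dF) dF).
apply: (deriv_minimum _ (-1) 1) => [||r _ _]; try lra.
by rewrite /= vadd_vscale0; apply: ymin.
Qed.

Lemma partial_x_MVT n (F F' : vec n -> R) k :
  (forall y, partial_x F y k (F' y)) ->
  forall w a, exists c, Rabs c <= Rabs a /\
    F (vadd w (vscale a (basis k))) - F w = F' (vadd w (vscale c (basis k))) * a.
Proof.
move=> dF w a.
have dline : forall c, derivable_pt_lim (fun r => F (vadd w (vscale r (basis k)))) c
    (F' (vadd w (vscale c (basis k)))).
  move=> c; apply: derivable_pt_lim_shift.
  have -> : (fun h => F (vadd w (vscale (c + h) (basis k)))) =
      (fun h => F (vadd (vadd w (vscale c (basis k))) (vscale h (basis k)))).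
    by apply: functional_extensionality => h; rewrite vadd_vscaleD.
  exact: dF.
by have := MVT_Rabs dline a; rewrite vadd_vscale0.
Qed.

(** * First-order expansion of the gradient *)

(* A path from [z] ([k = 0]) to [y] ([k = n]) changing one coordinate per step. *)
Definition stair n (y z : vec n) (k : nat) : vec n :=
  fun j => if leq j.+1 k then y j else z j.

Section Staircase.
Variables (n : nat) (y z : vec n).

Lemma stair0 : stair y z 0 = z.
Proof. by []. Qed.

Lemma stair_n : stair y z n = y.
Proof. by apply: functional_extensionality => j; rewrite /stair ltn_ord. Qed.

Lemma stairS (k : 'I_n) :
  stair y z k.+1 = vadd (stair y z k) (vscale (y k - z k) (basis k)).
Proof.
apply: functional_extensionality => j; rewrite /stair /vadd /vscale /basis.
rewrite -val_eqE /=.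
case: (ltngtP j k) => [jk|kj|/val_inj ->]; last by rewrite ltnSn; ring.
- by rewrite ltnS (ltnW jk); ring.
- by rewrite ltnS leqNgt kj /=; ring.
Qed.

Lemma norm2_stair_le (k : 'I_n) c : Rabs c <= Rabs (y k - z k) ->
  norm2 (vsub (vadd (stair y z k) (vscale c (basis k))) z) <= norm2 (vsub y z).
Proof.
move=> ck; apply: norm2_le_coord => j.
rewrite /vsub /vadd /vscale /basis /stair -val_eqE /=.
case: (ltngtP j k) => [jk|kj|/val_inj ->].
- by nra.
- by have := Rle_0_sqr (y j - z j); rewrite /Rsqr; nra.
- have -> : z k + c * 1 - z k = c by ring.
  exact: Rsqr_le_abs_1.
Qed.

End Staircase.

Section HessianExpansion.
Variables (n : nat) (grad : vec n -> R -> vec n) (hess : vec n -> R -> mat n).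
Hypothesis hess_partial : forall y t i j, 0 <= t ->
  partial_x (fun z => grad z t i) y j (hess y t i j).
Hypothesis hess_cont : forall y t i j, 0 <= t -> cont_xt (fun z s => hess z s i j) y t.

(* Mean value theorem on each step of the staircase from [z] to [y]; the
   intermediate points stay in the ball where the Hessian is close to [hess z t]. *)
Lemma grad_expansion z t i eps : 0 <= t -> 0 < eps ->
  exists d, 0 < d /\ forall y s, 0 <= s -> norm2 (vsub y z) < d -> Rabs (s - t) < d ->
    Rabs (grad y s i - grad z s i - mulmv (hess z t) (vsub y z) i)
      <= eps * norm1 (vsub y z).
Proof.
move=> t_ge0 eps_gt0.
have [d [d_gt0 hess_close]] : exists d, 0 < d /\ forall k,
    (fun k d => forall w s, 0 <= s -> norm2 (vsub w z) < d -> Rabs (s - t) < d ->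
      Rabs (hess w s i k - hess z t i k) < eps) k d.
  apply: finite_delta => [k d d' dd' close w s *|k]; last exact: hess_cont.
  by apply: close => //; lra.
exists d; split => // y s s_ge0 yz st.
have telescope := big_telescope n (fun k => grad (stair y z k) s i).
rewrite stair_n stair0 in telescope.
rewrite -telescope /mulmv -big_Rminus /norm1 big_Rmult_l.
apply: Rle_trans (Rabs_big_le _) _; apply: big_Rle => k.
rewrite stairS.
have [c [ck ->]] := partial_x_MVT (fun w => hess_partial w i k s_ge0)
  (stair y z k) (y k - z k).
rewrite /vsub -Rmult_minus_distr_r Rabs_mult.
apply: Rmult_le_compat_r; first exact: Rabs_pos.
left; apply: hess_close => //.
exact: Rle_lt_trans (norm2_stair_le ck) yz.
Qed.

Lemma grad_dir_deriv w d t i : 0 <= t ->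
  derivable_pt_lim (fun r => grad (vadd w (vscale r d)) t i) 0 (mulmv (hess w t) d i).
Proof.
move=> t_ge0 eps eps_gt0.
have K_ge0 := norm1_ge0 d.
have [e [[e_gt0 _] eK]] := exists_Rmult_le K_ge0 (ltac:(lra) : 0 < eps / 2).
have [dl [dl_gt0 expand]] := grad_expansion w i t_ge0 e_gt0.
have [r [[r_gt0 _] rK]] := exists_Rmult_le K_ge0 (ltac:(lra) : 0 < dl / 2).
exists (mkposreal _ r_gt0) => h h_neq0 /= h_r.
rewrite Rplus_0_l vadd_vscale0.
set y := vadd w (vscale h d).
have h_gt0 := Rabs_pos_lt h h_neq0.
have yw : vsub y w = vscale h d.
  by apply: functional_extensionality => j; rewrite /vsub /y /vadd; ring.
have norm1_yw : norm1 (vsub y w) = Rabs h * norm1 d.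
  by rewrite yw /norm1 big_Rmult_l; apply: eq_bigr => j _; rewrite Rabs_mult.
have mulmv_yw : mulmv (hess w t) (vsub y w) i = h * mulmv (hess w t) d i.
  by rewrite yw /mulmv big_Rmult_l; apply: eq_bigr => j _; rewrite /vscale; ring.
have yw_lt : norm2 (vsub y w) < dl.
  by apply: Rle_lt_trans (norm2_le_norm1 _) _; rewrite norm1_yw; nra.
have := expand y t t_ge0 yw_lt; rewrite Rminus_diag Rabs_R0 mulmv_yw norm1_yw => bound.
have -> : (grad y t i - grad w t i) / h - mulmv (hess w t) d i =
    (grad y t i - grad w t i - h * mulmv (hess w t) d i) / h by field.
apply: Rle_lt_trans (Rabs_div_le (b := e * norm1 d) h_neq0 _) _; last lra.
by apply: Rle_trans (bound dl_gt0) _; lra.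
Qed.

Lemma grad_strongly_monotone m :
  (forall y t, 0 <= t -> loewner_ge_scalar (hess y t) m) ->
  forall y z t, 0 <= t ->
  m * dot (vsub y z) (vsub y z) <= dot (vsub (grad y t) (grad z t)) (vsub y z).
Proof.
move=> hess_ge y z t t_ge0; set d := vsub y z.
pose phi r := dot d (grad (vadd z (vscale r d)) t).
have dphi c : derivable_pt_lim phi c (dot d (mulmv (hess (vadd z (vscale c d)) t) d)).
  apply: derivable_pt_lim_shift.
  have -> : (fun h => phi (c + h)) = fun h =>
      \sum_(i < n) d i * grad (vadd (vadd z (vscale c d)) (vscale h d)) t i.
    by apply: functional_extensionality => h; rewrite /phi vadd_vscaleD.
  apply: derivable_pt_lim_big => i.
  exact: derivable_pt_lim_scal (grad_dir_deriv _ _ _ t_ge0).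
have [c [phi01 _]] := MVT_cor2 phi _ 0 1 Rlt_0_1 (fun c _ => dphi c).
have z1d : vadd z (vscale 1 d) = y.
  by apply: functional_extensionality => j; rewrite /vadd /vscale /d /vsub; ring.
rewrite dot_vsubl (dotC (grad y t)) (dotC (grad z t)).
have -> : dot d (grad y t) - dot d (grad z t) = phi 1 - phi 0.
  by rewrite /phi z1d vadd_vscale0.
by rewrite phi01 Rminus_0_r Rmult_1_r; apply: hess_ge.
Qed.

(* The error splits into the expansion remainder at [(x (t + h), t + h)], the
   error of the difference quotient of [x], and the error of the difference
   quotient in time at the fixed point [x t]. *)
Lemma grad_chain_rule (x : R -> vec n) (xdot : vec n) gt t i : 0 <= t ->
  deriv_nonneg (fun s => grad (x t) s i) t gt ->
  (forall k, deriv_nonneg (fun s => x s k) t (xdot k)) ->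
  deriv_nonneg (fun s => grad (x s) s i) t (mulmv (hess (x t) t) xdot i + gt).
Proof.
move=> t_ge0 dgt dx eps eps_gt0.
set z := x t; set H := hess z t.
set M1 := \sum_(k < n) (Rabs (xdot k) + 1).
set M2 := \sum_(k < n) Rabs (H i k).
have M1_ge0 : 0 <= M1 by apply: big_Rge0 => k; have := Rabs_pos (xdot k); lra.
have M2_ge0 : 0 <= M2 by apply: big_Rge0 => k; apply: Rabs_pos.
have eps3_gt0 : 0 < eps / 3 by lra.
have [e1 [[e1_gt0 _] e1M1]] := exists_Rmult_le M1_ge0 eps3_gt0.
have [e2 [[e2_gt0 e2_le1] e2M2]] := exists_Rmult_le M2_ge0 eps3_gt0.
have [dc [dc_gt0 expand]] := grad_expansion z i t_ge0 e1_gt0.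
have [r [[r_gt0 _] rM1]] := exists_Rmult_le M1_ge0 (ltac:(lra) : 0 < dc / 2).
have [dq [dq_gt0 quot]] : exists d, 0 < d /\ forall k, (fun k d => forall h, h <> 0 ->
    Rabs h < d -> 0 <= t + h -> Rabs ((x (t + h) k - z k) / h - xdot k) < e2) k d.
  apply: finite_delta => [k d d' dd' close h *|k]; last exact: dx.
  by apply: close => //; lra.
have [dg [dg_gt0 time]] := dgt (eps / 3) eps3_gt0.
exists (Rmin (Rmin r dc) (Rmin dq dg)).
split; first by do 2?apply: Rmin_pos.
move=> h h_neq0 /Rmin_Rgt [/Rmin_Rgt [h_r h_dc] /Rmin_Rgt [h_dq h_dg]] th_ge0.
have h_gt0 := Rabs_pos_lt h h_neq0.
set y := x (t + h).
have incr : norm1 (vsub y z) <= M1 * Rabs h.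
  rewrite Rmult_comm big_Rmult_l; apply: big_Rle => k; rewrite Rmult_comm.
  apply: (Rabs_increment_le h_neq0).
  exact: Rlt_le_trans (quot k h h_neq0 h_dq th_ge0) e2_le1.
have yz : norm2 (vsub y z) < dc.
  by apply: Rle_lt_trans (norm2_le_norm1 _) _; nra.
have := expand y (t + h) th_ge0 yz.
have -> : t + h - t = h by ring.
move=> /(_ h_dc) remainder.
set E1 := grad y (t + h) i - grad z (t + h) i - mulmv H (vsub y z) i.
set T2 := \sum_(k < n) H i k * ((y k - z k) / h - xdot k).
set E3 := (grad z (t + h) i - grad z t i) / h - gt.
have T2E : T2 = / h * mulmv H (vsub y z) i - mulmv H xdot i.
  by rewrite /mulmv big_Rmult_l -big_Rminus; apply: eq_bigr => k _; rewrite /vsub; field.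
have -> : (grad y (t + h) i - grad z t i) / h - (mulmv H xdot i + gt) = E1 / h + T2 + E3.
  by rewrite T2E /E1 /E3; field.
have B1 : Rabs (E1 / h) <= eps / 3.
  apply: (Rabs_div_le h_neq0); apply: Rle_trans remainder _.
  by apply: Rle_trans (Rmult_le_compat_l _ _ _ (Rlt_le _ _ e1_gt0) incr) _; nra.
have B2 : Rabs T2 <= eps / 3.
  apply: Rle_trans (Rabs_big_le _) _; apply: Rle_trans e2M2.
  rewrite /M2 big_Rmult_l; apply: big_Rle => k.
  rewrite Rabs_mult Rmult_comm; apply: Rmult_le_compat_r; first exact: Rabs_pos.
  exact: Rlt_le (quot k h h_neq0 h_dq th_ge0).
have B3 : Rabs E3 < eps / 3 by apply: time.
have := Rabs_triang (E1 / h + T2) E3; have := Rabs_triang (E1 / h) T2; lra.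
Qed.

End HessianExpansion.

(** * Exponential decay of the gradient along the flow *)

Lemma norm2_exp_decay n (g : R -> vec n) (P : mat n) sigma :
  loewner_ge_scalar P sigma ->
  (forall t i, 0 <= t -> deriv_nonneg (fun s => g s i) t (- mulmv P (g t) i)) ->
  forall t, 0 <= t -> norm2 (g t) <= norm2 (g 0) * exp (- sigma * t).
Proof.
move=> P_ge dg t t_ge0.
pose dG i s := - mulmv P (g s) i.
pose G i := extend_left (fun s => g s i) (dG i 0).
have dGG i s : 0 <= s -> derivable_pt_lim (G i) s (dG i s).
  exact: derivable_extend_left (fun s => dg s i).
have sqG s : 0 <= s -> \sum_(i < n) G i s * G i s = dot (g s) (g s).
  by move=> s_ge0; apply: eq_bigr => i _; rewrite /G extend_left_id.
pose W s := (\sum_(i < n) G i s * G i s) * exp (2 * sigma * s).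
pose W' s := (\sum_(i < n) (dG i s * G i s + G i s * dG i s)) * exp (2 * sigma * s)
  + (\sum_(i < n) G i s * G i s) * (exp (2 * sigma * s) * (2 * sigma)).
have dW s : 0 <= s -> derivable_pt_lim W s (W' s).
  move=> s_ge0; apply: derivable_pt_lim_mult.
    by apply: derivable_pt_lim_big => i; apply: derivable_pt_lim_mult; apply: dGG.
  apply: (derivable_pt_lim_comp (fun r => 2 * sigma * r) exp); last exact: derivable_pt_lim_exp.
  by have := derivable_pt_lim_scal id (2 * sigma) s 1 (derivable_pt_lim_id s); rewrite Rmult_1_r.
have W'_le0 s : 0 <= s -> W' s <= 0.
  move=> s_ge0; rewrite /W'.
  have -> : \sum_(i < n) (dG i s * G i s + G i s * dG i s) =
      -2 * dot (g s) (mulmv P (g s)).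
    by rewrite /dot big_Rmult_l; apply: eq_bigr => i _; rewrite /G /dG extend_left_id //; ring.
  rewrite sqG //.
  have := P_ge (g s); have := exp_pos (2 * sigma * s); nra.
have := Rle_of_deriv_nonpos t_ge0 dW W'_le0.
rewrite /W (sqG t t_ge0) (sqG 0 (Rle_refl 0)) Rmult_0_r exp_0 Rmult_1_r => decay.
have exp_sqr : exp (- sigma * t) * exp (- sigma * t) * exp (2 * sigma * t) = 1.
  by rewrite -!exp_plus -exp_0; congr exp; ring.
have := exp_pos (- sigma * t); have := dot_ge0 (g t) => gt_ge0 e_gt0.
rewrite /norm2 -(sqrt_square (exp (- sigma * t))); last lra.
rewrite -sqrt_mult_alt; last exact: dot_ge0.
apply: sqrt_le_1_alt; nra.
Qed.

Theorem lemma1 (n : nat)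
  (f0 : vec n -> R -> R)
  (grad : vec n -> R -> vec n)
  (hess : vec n -> R -> mat n)
  (ft : vec n -> R -> R)
  (gradt : vec n -> R -> vec n)
  (m : R) (P : mat n) (sigma : R)
  (xstar : R -> vec n) (x : R -> vec n) (xdot : R -> vec n) (x0 : vec n)
  (Hgrad : forall y t i, 0 <= t -> partial_x (fun z => f0 z t) y i (grad y t i))
  (Hhess : forall y t i j, 0 <= t ->
            partial_x (fun z => grad z t i) y j (hess y t i j))
  (Hft : forall y t, 0 <= t -> deriv_nonneg (fun s => f0 y s) t (ft y t))
  (Hgradt : forall y t i, 0 <= t -> deriv_nonneg (fun s => grad y s i) t (gradt y t i))
  (Hcont_grad : forall y t i, 0 <= t -> cont_xt (fun z s => grad z s i) y t)
  (Hcont_hess : forall y t i j, 0 <= t -> cont_xt (fun z s => hess z s i j) y t)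
  (Hcont_ft : forall y t, 0 <= t -> cont_xt ft y t)
  (Hcont_gradt : forall y t i, 0 <= t -> cont_xt (fun z s => gradt z s i) y t)
  (Hm : 0 < m)
  (Hstrong : forall y t, 0 <= t -> loewner_ge_scalar (hess y t) m)
  (Hxstar : forall t, 0 <= t -> forall y, f0 (xstar t) t <= f0 y t)
  (HP : spd P) (Hsigma : 0 < sigma) (HPsigma : loewner_ge_scalar P sigma)
  (Hx0 : x 0 = x0)
  (Hxdot : forall t i, 0 <= t -> deriv_nonneg (fun s => x s i) t (xdot t i))
  (Hode : forall t, 0 <= t ->
     mulmv (hess (x t) t) (xdot t) =
     vopp (vadd (mulmv P (grad (x t) t)) (gradt (x t) t))) :
  exists C : R, 0 <= C /\
    forall t, 0 <= t -> norm2 (vsub (x t) (xstar t)) <= C * exp (- sigma * t).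
Proof.
pose g s := grad (x s) s.
have g_ode t i : 0 <= t -> deriv_nonneg (fun s => g s i) t (- mulmv P (g t) i).
  move=> t_ge0.
  have -> : - mulmv P (g t) i = mulmv (hess (x t) t) (xdot t) i + gradt (x t) t i.
    by rewrite Hode // /vopp /vadd /g; ring.
  exact: (grad_chain_rule Hhess Hcont_hess t_ge0 (Hgradt _ _ i t_ge0)
    (fun k => Hxdot t k t_ge0)).
exists (norm2 (g 0) / m); split.
  by apply: Rmult_le_pos; [apply: sqrt_pos | apply/Rlt_le/Rinv_0_lt_compat].
move=> t t_ge0.
have g_minus_gstar : vsub (grad (x t) t) (grad (xstar t) t) = g t.
  apply: functional_extensionality => i.
  by rewrite /vsub (partial_x_eq0_at_min (Hgrad _ _ i t_ge0) (Hxstar t t_ge0)) /g; ring.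
have := grad_strongly_monotone Hhess Hcont_hess Hstrong (x t) (xstar t) t_ge0.
rewrite g_minus_gstar => /(mul_norm2_le_of_coercive Hm) coercive.
have decay := norm2_exp_decay HPsigma g_ode t_ge0.
apply: (Rmult_le_reg_l m) => //.
have -> : m * (norm2 (g 0) / m * exp (- sigma * t)) = norm2 (g 0) * exp (- sigma * t).
  by field; lra.
lra.
Qed.
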